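(* Let $G$ be a connected graph and let $x\in V(G)$ be a vertex with $d(x)=\Delta(G)\le |G|-2$. If $V(G)\setminus N[x]$ is an independent set in $G$, then $G$ admits an antimagic orientation.
   Context: All graphs are finite and simple; $|G|$ is the number of vertices, $\Delta(G)$ the maximum degree, $N(v)$ the set of neighbours of $v$, and $N[v]=N(v)\cup\{v\}$. For a digraph $D$ and an injective map $\tau$ from the arc set $A(D)$ to positive integers, $s_{(D,\tau)}(u)$ is the sum of labels of arcs entering $u$ minus the sum of labels of arcs leaving $u$ ($0$ if $u$ is isolated). If $D$ has $m$ arcs, a bijection $\tau:A(D)\to\{1,\dots,m\}$ is an antimagic labeling if the values $s_{(D,\tau)}(u)$ are pairwise distinct over all vertices. $G$ admits an antimagic orientation if some orientation $D$ of $G$ has an antimagic labeling. *)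

From mathcomp Require Import all_boot all_order all_algebra.
Set Implicit Arguments. Unset Strict Implicit. Unset Printing Implicit Defensive.
Import GRing.Theory Num.Theory.

Definition simple_graph (T : finType) (e : rel T) : Prop :=
  symmetric e /\ irreflexive e.

Definition nbhd (T : finType) (e : rel T) (v : T) : {set T} := [set u | e v u].
Definition deg (T : finType) (e : rel T) (v : T) : nat := #|nbhd e v|.
Definition cnbhd (T : finType) (e : rel T) (v : T) : {set T} := v |: nbhd e v.
Definition maxdeg (T : finType) (e : rel T) : nat := \max_(v : T) deg e v.

Definition connected_graph (T : finType) (e : rel T) : Prop :=
  forall u v : T, connect e u v.

Definition independent (T : finType) (e : rel T) (A : {set T}) : Prop :=
  forall u v, u \in A -> v \in A -> ~~ e u v.

Definition orientation (T : finType) (e : rel T) (o : rel T) : Prop :=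
  (forall u v, o u v -> e u v) /\
  (forall u v, e u v -> (o u v && ~~ o v u) || (o v u && ~~ o u v)).

Definition arcs (T : finType) (o : rel T) : {set T * T} :=
  [set a | o a.1 a.2].

Definition labeling (T : finType) (o : rel T) (tau : T * T -> nat) : Prop :=
  {in arcs o &, injective tau} /\
  (forall a, a \in arcs o -> 1 <= tau a <= #|arcs o|)%N /\
  (forall k, (1 <= k <= #|arcs o|)%N -> exists2 a, a \in arcs o & tau a = k).

Definition vsum (T : finType) (o : rel T) (tau : T * T -> nat) (u : T) : int :=
  ((\sum_(v : T | o v u) tau (v, u))%:Z - (\sum_(v : T | o u v) tau (u, v))%:Z)%R.

Definition antimagic_labeling (T : finType) (o : rel T) (tau : T * T -> nat) : Prop :=
  labeling o tau /\ injective (vsum o tau).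

Definition has_antimagic_orientation (T : finType) (e : rel T) : Prop :=
  exists o : rel T, orientation e o /\ exists tau : T * T -> nat, antimagic_labeling o tau.

From mathcomp Require Import all_boot all_order all_algebra zify.
Set Implicit Arguments. Unset Strict Implicit. Unset Printing Implicit Defensive.
Import GRing.Theory Num.Theory Order.TTheory.

(* Let x be a vertex of maximum degree, N = N(x) and R = V - N[x], an independent
   set.  The antimagic orientation D is built as follows.
   - Edges inside N are oriented and labelled 1..a by a balanced labelling: for any
     graph, orienting along greedy trails with consecutive labels gives an injective
     labelling by 1..a in which each vertex's out-sum exceeds its in-sum by at most
     a + 1 (Section BalancedLabelings, proved by induction on the number of edges).
   - Every edge at a vertex r of R is oriented r -> N and gets a label in a+1..a+b,
     ranked by (deg r, r); since R is independent these are all edges at R.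
   - The arcs x -> v, v in N, get the top labels, ranked by the partial sum at v.
   Then s(x) < s(r) < s(v) for r in R, v in N (using deg r <= deg x = |N|), and the
   rankings make s injective on R and on N. *)

Section Ranking.
Variables (X : finType) (S : {set X}) (key : X -> int).

Definition lex_le (y z : X) : bool :=
  (key y < key z)%R || ((key y == key z) && (enum_rank y <= enum_rank z)).
Definition lex_lt (y z : X) : bool :=
  (key y < key z)%R || ((key y == key z) && (enum_rank y < enum_rank z)).

Definition rank (z : X) : nat := #|[set y in S | lex_le y z]|.

Lemma rank_gt0 z : z \in S -> 0 < rank z.
Proof. by move=> zS; apply/card_gt0P; exists z; rewrite inE zS /lex_le eqxx leqnn orbT. Qed.

Lemma rank_le_card z : rank z <= #|S|.
Proof. by apply: subset_leq_card; apply/subsetP=> y; rewrite inE => /andP[]. Qed.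

Lemma lex_lt_key y z : lex_lt y z -> (key y <= key z)%R.
Proof. by case/orP=> [/ltW //|/andP[/eqP -> _]]. Qed.

Lemma lex_lt_total y z : y != z -> lex_lt y z || lex_lt z y.
Proof.
move=> neq_yz; have : (enum_rank y : nat) != enum_rank z.
  by apply: contra neq_yz => /eqP/val_inj/enum_rank_inj ->.
rewrite /lex_lt; lia.
Qed.

Lemma rank_lt y z : z \in S -> lex_lt y z -> rank y < rank z.
Proof.
move=> zS lt_yz; apply: proper_card; apply/properP; split.
  apply/subsetP=> u; rewrite !inE => /andP[-> le_uy] /=.
  by move: le_uy lt_yz; rewrite /lex_le /lex_lt; lia.
exists z; first by rewrite inE zS /lex_le eqxx leqnn orbT.
by rewrite inE negb_and zS /= /lex_le; move: lt_yz; rewrite /lex_lt; lia.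
Qed.

Lemma rank_inj : {in S &, injective rank}.
Proof.
move=> y z yS zS eq_r; apply/eqP; apply/negP=> /negP neq_yz.
by case/orP: (lex_lt_total neq_yz) => /rank_lt;
  [move/(_ zS)|move/(_ yS)]; rewrite eq_r ltnn.
Qed.

Lemma rank_le_below z (kap : int) :
  (key z < kap)%R -> rank z <= #|[set y in S | (key y < kap)%R]|.
Proof.
move=> lt_z; apply: subset_leq_card; apply/subsetP=> y; rewrite !inE.
by case/andP=> -> /=; move: lt_z; rewrite /lex_le; lia.
Qed.

Lemma rank_gt_below z (kap : int) : z \in S -> (kap <= key z)%R ->
  #|[set y in S | (key y < kap)%R]| < rank z.
Proof.
move=> zS ge_z; apply: proper_card; apply/properP; split.
  apply/subsetP=> y; rewrite !inE => /andP[-> /=] lt_y.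
  by move: ge_z; rewrite /lex_le; lia.
exists z; first by rewrite inE zS /lex_le eqxx leqnn orbT.
by rewrite inE zS /=; move: ge_z; lia.
Qed.

End Ranking.

Lemma inj_range_onto (X : finType) (A : {set X}) (f : X -> nat) :
  {in A &, injective f} -> (forall z, z \in A -> 0 < f z <= #|A|) ->
  forall n, 0 < n <= #|A| -> exists2 z, z \in A & f z = n.
Proof.
move=> f_inj f_range n n_range.
pose g (z : X) : 'I_#|A|.+1 := inord (f z).
have gE z : z \in A -> (g z : nat) = f z.
  by move=> zA; rewrite /g inordK // ltnS; case/andP: (f_range z zA).
have g_inj : {in A &, injective g}.
  by move=> y z yA zA /(congr1 val); rewrite /= !gE //; apply: f_inj.
pose B := [set~ (ord0 : 'I_#|A|.+1)].
have inB (j : 'I_#|A|.+1) : (j \in B) = (0 < j) by rewrite !inE -(inj_eq val_inj) /= lt0n.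
have gA_sub : g @: A \subset B.
  by apply/subsetP=> j /imsetP[z zA ->]; rewrite inB gE //; case/andP: (f_range z zA).
have gA_eq : g @: A = B.
  apply/eqP; rewrite eqEcard gA_sub (card_in_imset g_inj) cardsC1 card_ord.
  by rewrite leqnn.
have : (inord n : 'I_#|A|.+1) \in B by rewrite inB inordK ?ltnS; case/andP: n_range.
rewrite -gA_eq => /imsetP[z zA gz]; exists z => //.
by move: (congr1 val gz); rewrite /= gE // inordK // ltnS; case/andP: n_range.
Qed.

Lemma leq_sum_pred (X : finType) (P Q : pred X) (F : X -> nat) :
  (forall y, P y -> Q y) -> \sum_(y | P y) F y <= \sum_(y | Q y) F y.
Proof.
move=> sub_PQ; rewrite (bigID P Q) /= -[X in X <= _]addn0 leq_add //.
by rewrite (eq_bigl P) // => y; case Py: (P y); rewrite ?(sub_PQ y Py) ?andbF.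
Qed.

Lemma sum_ge_const (X : finType) (P : pred X) (F : X -> nat) c :
  (forall y, P y -> c <= F y) -> #|P| * c <= \sum_(y | P y) F y.
Proof. by move=> F_ge; rewrite -sum_nat_const; apply: leq_sum. Qed.

Lemma sum_le_const (X : finType) (P : pred X) (F : X -> nat) c :
  (forall y, P y -> F y <= c) -> \sum_(y | P y) F y <= #|P| * c.
Proof. by move=> F_le; rewrite -sum_nat_const; apply: leq_sum. Qed.

Section BalancedLabelings.
Variable T : finType.
Implicit Types (f o : rel T) (l : T * T -> nat).

Definition outsum o l (v : T) : nat := \sum_(z | o v z) l (v, z).
Definition insum o l (v : T) : nat := \sum_(z | o z v) l (z, v).
Definition excess o l (v : T) : int := ((outsum o l v)%:Z - (insum o l v)%:Z)%R.

Definition add_arc o (u w : T) : rel T := fun y z => o y z || ((y == u) && (z == w)).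
Definition relabel l (p : T * T) (L : nat) : T * T -> nat :=
  fun q => if q == p then L else l q.
Definition delete_edge f (u w : T) : rel T :=
  fun y z => f y z && ~~ (((y == u) && (z == w)) || ((y == w) && (z == u))).

(* The inductive invariant: an orientation of f, labels injective in lo+1..lo+m
   (m = number of arcs), and excess at most lo+m+1 everywhere, even after adding
   the weight t at the distinguished vertex c. *)
Definition balanced f (c : T) (lo t : nat) : Prop :=
  exists o l, [/\ orientation f o, {in arcs o &, injective l},
    (forall p, p \in arcs o -> lo < l p <= lo + #|arcs o|) &
    forall v, (excess o l v + (if v == c then t%:Z else 0) <= (lo + #|arcs o|).+1%:Z)%R].

Lemma outsum_add_arc o l u w L v : ~~ o u w ->
  outsum (add_arc o u w) (relabel l (u, w) L) v = outsum o l v + (if v == u then L else 0).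
Proof.
move=> no_uw; rewrite /outsum; case: (eqVneq v u) => [->|neq_vu].
  rewrite (bigD1 w) /=; last by rewrite /add_arc !eqxx orbT.
  rewrite /relabel eqxx addnC; congr (_ + _).
  apply: eq_big => z; first by rewrite /add_arc; case: (eqVneq z w) => [->|_];
    rewrite ?(negbTE no_uw) ?eqxx ?andbT ?andbF ?orbF.
  by case/andP=> _ neq_zw; rewrite xpair_eqE (negbTE neq_zw) andbF.
rewrite addn0; apply: eq_big => z; first by rewrite /add_arc (negbTE neq_vu) orbF.
by rewrite /relabel xpair_eqE (negbTE neq_vu).
Qed.

Lemma insum_add_arc o l u w L v : ~~ o u w ->
  insum (add_arc o u w) (relabel l (u, w) L) v = insum o l v + (if v == w then L else 0).
Proof.
move=> no_uw; rewrite /insum; case: (eqVneq v w) => [->|neq_vw].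
  rewrite (bigD1 u) /=; last by rewrite /add_arc !eqxx orbT.
  rewrite /relabel eqxx addnC; congr (_ + _).
  apply: eq_big => z; first by rewrite /add_arc; case: (eqVneq z u) => [->|_];
    rewrite ?(negbTE no_uw) ?eqxx ?andbT ?andbF ?orbF.
  by case/andP=> _ neq_zu; rewrite xpair_eqE (negbTE neq_zu).
rewrite addn0; apply: eq_big => z; first by rewrite /add_arc (negbTE neq_vw) andbF orbF.
by rewrite /relabel xpair_eqE (negbTE neq_vw) andbF.
Qed.

Lemma excess_add_arc o l u w L v : ~~ o u w ->
  excess (add_arc o u w) (relabel l (u, w) L) v =
  (excess o l v + (if v == u then L%:Z else 0) - (if v == w then L%:Z else 0))%R.
Proof.
move=> no_uw; rewrite /excess outsum_add_arc // insum_add_arc //.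
by case: ifP; case: ifP => _ _; lia.
Qed.

Lemma arcs_add_arc o u w : arcs (add_arc o u w) = (u, w) |: arcs o.
Proof. by apply/setP=> -[y z]; rewrite !inE /add_arc xpair_eqE orbC. Qed.

Lemma symmetric_delete_edge f u w : symmetric f -> symmetric (delete_edge f u w).
Proof.
move=> fsym y z; rewrite /delete_edge fsym; congr (_ && ~~ _).
by rewrite orbC; congr (_ || _); rewrite andbC.
Qed.

Lemma irreflexive_delete_edge f u w : irreflexive f -> irreflexive (delete_edge f u w).
Proof. by move=> firr y; rewrite /delete_edge firr. Qed.

Lemma card_delete_edge f u w : f u w -> #|arcs (delete_edge f u w)| < #|arcs f|.
Proof.
move=> fuw; apply: proper_card; apply/properP; split.
  by apply/subsetP=> p; rewrite !inE => /andP[].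
by exists (u, w); rewrite !inE /delete_edge /= ?fuw ?eqxx.
Qed.

Lemma orientation_add_arc f o w c : symmetric f -> c != w -> f w c ->
  orientation (delete_edge f w c) o -> orientation f (add_arc o w c).
Proof.
move=> fsym neq_cw fwc [o_sub o_dir]; split.
  move=> y z /orP[/o_sub/andP[] //|/andP[/eqP -> /eqP ->]]; exact: fwc.
have [no_wc no_cw] : ~~ o w c /\ ~~ o c w.
  by split; apply/negP=> /o_sub; rewrite /delete_edge !eqxx ?orbT andbF.
move=> y z fyz; rewrite /add_arc.
have [/orP[]/andP[/eqP -> /eqP ->]|other] :=
  boolP (((y == w) && (z == c)) || ((y == c) && (z == w))).
- by rewrite !eqxx (negbTE no_wc) (negbTE no_cw) (negbTE neq_cw).
- by rewrite !eqxx (negbTE no_wc) (negbTE no_cw) (negbTE neq_cw).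
have not_wc : ((y == w) && (z == c)) = false.
  by apply/negbTE; apply: contra other => ->.
have not_cw : ((z == w) && (y == c)) = false.
  by apply/negbTE; apply: contra other; rewrite andbC => ->; rewrite orbT.
by rewrite not_wc not_cw !orbF; apply: o_dir; rewrite /delete_edge fyz other.
Qed.

Lemma excess_isolated f o l c : symmetric f -> orientation f o ->
  (forall z, ~~ f c z) -> excess o l c = 0%R.
Proof.
move=> fsym [o_sub _] c_isol.
rewrite /excess /outsum /insum !big_pred0 // => z; apply/negP => /o_sub.
  by rewrite fsym; apply/negP.
by apply/negP.
Qed.

Lemma balanced_no_edges f c lo t : (forall u v, ~~ f u v) -> t <= lo.+1 -> balanced f c lo t.
Proof.
move=> no_edge t_le; exists (fun _ _ => false), (fun _ => 0).
have arcs0 : arcs (fun _ _ : T => false) = set0 by apply/setP=> p; rewrite !inE.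
split.
- by split=> // u v; rewrite (negbTE (no_edge u v)).
- by move=> p; rewrite inE.
- by move=> p; rewrite inE.
- move=> v; rewrite /excess /outsum /insum !big_pred0 // arcs0 cards0.
  by case: ifP => _; lia.
Qed.

(* The inductive step: solve the problem for f minus {c, w} centred at w with all
   labels shifted up by one, then orient w -> c with the freed label lo + 1.
   The arc w -> c carries the weight t' = lo + 1 from c to w. *)
Lemma balanced_extend f c w lo t : symmetric f -> irreflexive f -> f c w -> t <= lo.+1 ->
  balanced (delete_edge f w c) w lo.+1 lo.+1 -> balanced f c lo t.
Proof.
move=> fsym firr fcw t_le [o [l [o_or l_inj l_range l_exc]]].
have neq_cw : c != w by apply: contraTneq fcw => ->; rewrite firr.
have no_wc : ~~ o w c.
  by apply/negP=> /(proj1 o_or); rewrite /delete_edge !eqxx andbF.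
have card_arcs : #|arcs (add_arc o w c)| = #|arcs o|.+1.
  by rewrite arcs_add_arc cardsU1 inE /= (negbTE no_wc).
exists (add_arc o w c), (relabel l (w, c) lo.+1); split.
- by apply: orientation_add_arc; rewrite // fsym.
- move=> p q; rewrite arcs_add_arc !in_setU1 /relabel.
  case: eqVneq => [->|neq_p]; case: eqVneq => [->|neq_q] //= p_in q_in.
  + by move: (l_range q q_in); lia.
  + by move: (l_range p p_in); lia.
  + exact: l_inj.
- move=> p; rewrite card_arcs arcs_add_arc in_setU1 /relabel.
  case: eqVneq => [_|_ /l_range] /=; lia.
- move=> v; rewrite excess_add_arc // card_arcs.
  have := l_exc v; have := l_exc c; rewrite (negbTE neq_cw).
  case: (eqVneq v c) => [->|_]; first by rewrite ?(negbTE neq_cw) ?eqxx; lia.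
  by case: (eqVneq v w) => _; lia.
Qed.

Lemma balanced_isolated f c u lo t : symmetric f -> (forall z, ~~ f c z) -> t <= lo.+1 ->
  balanced f u lo 0 -> balanced f c lo t.
Proof.
move=> fsym c_isol t_le [o [l [o_or l_inj l_range l_exc]]]; exists o, l; split=> // v.
case: (eqVneq v c) => [->|_]; last by have := l_exc v; rewrite if_same.
by rewrite (excess_isolated l fsym o_or c_isol); lia.
Qed.

Lemma balanced_exists f c lo t : symmetric f -> irreflexive f -> t <= lo.+1 ->
  balanced f c lo t.
Proof.
move: {2}#|arcs f| (leqnn #|arcs f|) => n.
elim: n f c lo t => [|n IH] f c lo t le_fn fsym firr t_le.
  apply: balanced_no_edges t_le => u v; apply/negP => fuv.
  by move: le_fn; rewrite leqn0 => /eqP/cards0_eq/setP/(_ (u, v)); rewrite !inE fuv.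
have extend c' w t' : f c' w -> t' <= lo.+1 -> balanced f c' lo t'.
  move=> fcw le_t; apply: (balanced_extend (w := w)) => //; apply: IH.
  - by rewrite -ltnS (leq_trans (card_delete_edge _) le_fn) // fsym.
  - exact: symmetric_delete_edge.
  - exact: irreflexive_delete_edge.
  - by [].
case: (pickP (f c)) => [w fcw|c_isol]; first exact: extend fcw t_le.
case: (pickP (fun p : T * T => f p.1 p.2)) => [[u w] /= fuw|no_edge].
  by apply: (balanced_isolated (u := u)) (extend u w 0 fuw _) => // z; rewrite c_isol.
by apply: balanced_no_edges t_le => u v; rewrite (no_edge (u, v)).
Qed.

(* Every graph has an orientation with an injective labeling by 1..m (m arcs)
   in which the out-label sum exceeds the in-label sum by at most m + 1 at every
   vertex; the vertex c only serves as the initial centre of the induction. *)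
Lemma balanced_orientation f (c : T) : symmetric f -> irreflexive f ->
  exists o l, [/\ orientation f o, {in arcs o &, injective l},
    (forall p, p \in arcs o -> 0 < l p <= #|arcs o|) &
    forall v, (excess o l v <= (#|arcs o|.+1)%:Z)%R].
Proof.
move=> fsym firr; have [o [l [o_or l_inj l_range l_exc]]] :=
  balanced_exists c fsym firr (leq0n 1).
exists o, l; split=> // v; have := l_exc v; rewrite if_same; lia.
Qed.

End BalancedLabelings.

Section Construction.
Variables (T : finType) (e : rel T) (x : T).
Hypothesis esym : symmetric e.
Hypothesis eirr : irreflexive e.

(* outer u: u lies in R = V - N[x]; inner_edge: the edges of G[N]. *)
Definition outer (u : T) : bool := (u != x) && ~~ e x u.
Definition inner_edge : rel T := fun y z => e y z && e x y && e x z.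

Hypothesis outer_adj : forall r, outer r -> exists v, e r v.
Hypothesis deg_le_x : forall v, deg e v <= deg e x.
Hypothesis outer_indep : forall u w, outer u -> outer w -> ~~ e u w.

Variables (oN : rel T) (lamN : T * T -> nat).
Hypothesis oN_orient : orientation inner_edge oN.
Hypothesis lamN_inj : {in arcs oN &, injective lamN}.
Hypothesis lamN_range : forall p, p \in arcs oN -> 0 < lamN p <= #|arcs oN|.
Hypothesis oN_excess : forall v, (excess oN lamN v <= (#|arcs oN|.+1)%:Z)%R.

Definition D : rel T :=
  fun u w => if u == x then e x w else if e x u then oN u w else e u w.

Definition a : nat := #|arcs oN|.
Definition outer_arcs : {set T * T} := [set p | outer p.1 && e p.1 p.2].
Definition b : nat := #|outer_arcs|.
Definition x_arcs : {set T * T} := [set p | (p.1 == x) && e x p.2].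

(* R-arcs are ranked by the degree (then index) of their tail in R. *)
Definition outer_key (r : T) : nat := deg e r * #|T| + enum_rank r.
Definition arc_key (p : T * T) : int := (outer_key p.1)%:Z%R.
Definition rank_outer (p : T * T) : nat := rank outer_arcs arc_key p.

Definition low_label (p : T * T) : nat := if e x p.1 then lamN p else a + rank_outer p.

Definition partial_sum (v : T) : int :=
  ((\sum_(y | D y v && (y != x)) low_label (y, v))%:Z -
   (\sum_(y | D v y) low_label (v, y))%:Z)%R.

Definition rank_inner (v : T) : nat := rank (nbhd e x) partial_sum v.

Definition label (p : T * T) : nat :=
  if p.1 == x then a + b + rank_inner p.2 else low_label p.

Lemma inner_arc y z : oN y z -> [/\ e y z, e x y & e x z].
Proof. by move/(proj1 oN_orient); rewrite /inner_edge => /andP[/andP[]]. Qed.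

Lemma nbr_neq_x v : e x v -> v != x.
Proof. by apply: contraTneq => ->; rewrite eirr. Qed.

Lemma inner_arc_neq_x y z : oN y z -> y != x.
Proof. by case/inner_arc => _ /nbr_neq_x. Qed.

Lemma D_from_x w : D x w = e x w.
Proof. by rewrite /D eqxx. Qed.

Lemma D_from_inner v w : e x v -> D v w = oN v w.
Proof. by move=> xv; rewrite /D (negbTE (nbr_neq_x xv)) xv. Qed.

Lemma D_from_outer r w : outer r -> D r w = e r w.
Proof. by case/andP=> neq_rx not_xr; rewrite /D (negbTE neq_rx) (negbTE not_xr). Qed.

Lemma D_to_x y : D y x = false.
Proof.
rewrite /D; case: ifP => [_|_]; first by rewrite eirr.
case: ifP => [_|not_xy]; last by rewrite esym not_xy.
by apply/negP => /inner_arc[_ _]; rewrite eirr.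
Qed.

Lemma D_to_outer y r : outer r -> D y r = false.
Proof.
move=> out_r; have /andP[neq_rx not_xr] := out_r.
rewrite /D; case: ifP => [_|neq_yx]; first exact/negbTE.
case: ifP => [_|not_xy]; first by apply/negP => /inner_arc[_ _]; rewrite (negbTE not_xr).
by apply/negbTE; apply: outer_indep; rewrite // /outer neq_yx not_xy.
Qed.

Lemma D_orientation : orientation e D.
Proof.
split.
  move=> u w; rewrite /D; case: ifP => [/eqP -> //|_].
  by case: ifP => // _ /inner_arc[].
move=> u w; case: (eqVneq u x) => [-> xw|neq_ux]; first by rewrite D_from_x D_to_x xw.
case: (eqVneq w x) => [-> ux|neq_wx euw]; first by rewrite D_from_x D_to_x esym ux orbT.
have [xu|not_xu] := boolP (e x u); have [xw|not_xw] := boolP (e x w).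
- by rewrite !D_from_inner //; apply: (proj2 oN_orient); rewrite /inner_edge euw xu xw.
- have out_w : outer w by rewrite /outer neq_wx not_xw.
  by rewrite (D_to_outer u out_w) (D_from_outer u out_w) esym euw.
- have out_u : outer u by rewrite /outer neq_ux not_xu.
  by rewrite (D_to_outer w out_u) (D_from_outer w out_u) euw.
- have out_u : outer u by rewrite /outer neq_ux not_xu.
  have out_w : outer w by rewrite /outer neq_wx not_xw.
  by move: (outer_indep out_u out_w); rewrite euw.
Qed.

Lemma arcs_D : arcs D = x_arcs :|: arcs oN :|: outer_arcs.
Proof.
apply/setP => -[u w]; rewrite !inE /= /D.
case: (eqVneq u x) => [->|neq_ux] /=.
  have -> : oN x w = false by apply/negP => /inner_arc_neq_x; rewrite eqxx.
  by rewrite /outer eqxx andFb !orbF.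
case: ifP => xu; first by rewrite /outer xu andbF orbF.
have -> : oN u w = false by apply/negP => /inner_arc[]; rewrite xu.
by rewrite /outer neq_ux xu.
Qed.

Lemma card_x_arcs : #|x_arcs| = #|nbhd e x|.
Proof.
have -> : x_arcs = [set (x, v) | v in nbhd e x].
  apply/setP => -[u w]; rewrite !inE /=; apply/idP/imsetP.
    by case/andP=> /eqP -> xw; exists w; rewrite // inE.
  by case=> v; rewrite inE => xv [-> ->]; rewrite eqxx xv.
by apply: card_imset => v w [].
Qed.

Lemma card_arcs_D : #|arcs D| = #|nbhd e x| + a + b.
Proof.
have disj1 : x_arcs :&: arcs oN = set0.
  apply/setP=> p; rewrite !inE; apply/negP => /andP[/andP[/eqP eq_p1 _] /inner_arc_neq_x].
  by rewrite eq_p1 eqxx.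
have disj2 : (x_arcs :|: arcs oN) :&: outer_arcs = set0.
  apply/setP=> p; rewrite !inE /outer.
  apply/negP => /andP[/orP[/andP[/eqP -> _]|/inner_arc[_ xp _]]]; first by rewrite eqxx.
  by rewrite xp andbF.
by rewrite arcs_D !cardsU disj2 disj1 !cards0 !subn0 card_x_arcs.
Qed.

Lemma rank_inner_gt0 v : e x v -> 0 < rank_inner v.
Proof. by move=> xv; apply: rank_gt0; rewrite inE. Qed.

Lemma label_inner p : p \in arcs oN -> label p = lamN p.
Proof.
rewrite inE => /inner_arc[_ xp1 _].
by rewrite /label (negbTE (nbr_neq_x xp1)) /low_label xp1.
Qed.

Lemma label_outer p : p \in outer_arcs -> label p = a + rank_outer p.
Proof.
rewrite inE => /andP[/andP[neq_p1x not_xp1] _].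
by rewrite /label (negbTE neq_p1x) /low_label (negbTE not_xp1).
Qed.

Lemma label_x_arc p : p \in x_arcs -> a + b < label p <= a + b + #|nbhd e x|.
Proof.
rewrite inE => /andP[/eqP eq_p1 xp2]; rewrite /label eq_p1 eqxx.
have rank_pos := rank_inner_gt0 xp2.
have rank_le : rank_inner p.2 <= #|nbhd e x| := rank_le_card (nbhd e x) partial_sum p.2.
lia.
Qed.

Lemma label_inner_arc p : p \in arcs oN -> 0 < label p <= a.
Proof. by move=> pN; rewrite label_inner //; apply: lamN_range. Qed.

Lemma label_outer_arc p : p \in outer_arcs -> a < label p <= a + b.
Proof.
move=> pR; rewrite label_outer //.
have rank_pos : 0 < rank_outer p := rank_gt0 arc_key pR.
have rank_le : rank_outer p <= b := rank_le_card outer_arcs arc_key p.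
lia.
Qed.

Lemma label_block p : p \in arcs D ->
  [\/ p \in x_arcs /\ a + b < label p <= a + b + #|nbhd e x|,
      p \in arcs oN /\ 0 < label p <= a
    | p \in outer_arcs /\ a < label p <= a + b].
Proof.
rewrite arcs_D !in_setU => /orP[/orP[]|] p_in.
- by constructor 1; split; last exact: label_x_arc.
- by constructor 2; split; last exact: label_inner_arc.
- by constructor 3; split; last exact: label_outer_arc.
Qed.

Lemma label_inj : {in arcs D &, injective label}.
Proof.
move=> p q /label_block p_blk /label_block q_blk eq_l.
case: p_blk q_blk => -[p_in lp] [] [q_in lq]; try by move: lp lq; rewrite eq_l; lia.
- move: p_in q_in eq_l; rewrite !inE /label => /andP[/eqP p1 xp2] /andP[/eqP q1 xq2].
  rewrite p1 q1 eqxx => /addnI eq_rank.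
  have eq_p2 : p.2 = q.2 by apply: (@rank_inj _ (nbhd e x) partial_sum); rewrite ?inE.
  by case: p q p1 q1 eq_p2 {xp2 xq2 eq_rank lp lq} => [? ?] [? ?] /= -> -> ->.
- by apply: lamN_inj; move: eq_l; rewrite !label_inner.
- move: eq_l; rewrite !label_outer // => /addnI; exact: (@rank_inj _ outer_arcs arc_key).
Qed.

Lemma label_labeling : labeling D label.
Proof.
have label_range p : p \in arcs D -> 0 < label p <= #|arcs D|.
  by rewrite card_arcs_D => /label_block[] [_]; lia.
split; [exact: label_inj | split; first exact: label_range].
by move=> k k_range; apply: inj_range_onto label_inj label_range k k_range.
Qed.

(* Minus the vertex sums at x and at r in R (both are sources). *)
Definition x_sum : nat := \sum_(v | e x v) (a + b + rank_inner v).
Definition outer_sum (r : T) : nat := \sum_(v | e r v) (a + rank_outer (r, v)).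

Lemma vsum_x : vsum D label x = (- x_sum%:Z)%R.
Proof.
rewrite /vsum big_pred0 => [|y]; last exact: D_to_x.
rewrite sub0r; congr (- (_ %:Z))%R; apply: eq_big => v; first exact: D_from_x.
by move=> _; rewrite /label /= eqxx.
Qed.

Lemma vsum_outer r : outer r -> vsum D label r = (- (outer_sum r)%:Z)%R.
Proof.
move=> out_r; rewrite /vsum big_pred0 => [|y]; last exact: D_to_outer.
rewrite sub0r; congr (- (_ %:Z))%R; apply: eq_big => v; first exact: D_from_outer.
move=> _; case/andP: out_r => neq_rx not_xr.
by rewrite /label /= (negbTE neq_rx) /low_label /= (negbTE not_xr).
Qed.

Lemma vsum_inner v : e x v -> vsum D label v = (partial_sum v + (a + b + rank_inner v)%:Z)%R.
Proof.
move=> xv; rewrite /vsum /partial_sum (bigD1 x) /=; last by rewrite D_from_x.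
rewrite /label /= eqxx (negbTE (nbr_neq_x xv)).
have -> : \sum_(y | D y v && (y != x)) (if y == x then a + b + rank_inner v else low_label (y, v)) =
          \sum_(y | D y v && (y != x)) low_label (y, v).
  by apply: eq_bigr => y /andP[_ /negbTE ->].
lia.
Qed.

(* The balance bound on the orientation of G[N] keeps partial sums above -(a+1). *)
Lemma partial_sum_lb v : e x v -> (- (a.+1)%:Z <= partial_sum v)%R.
Proof.
move=> xv.
have out_eq : \sum_(y | D v y) low_label (v, y) = outsum oN lamN v.
  rewrite /outsum; apply: eq_big => y; first exact: D_from_inner.
  by move=> _; rewrite /low_label /= xv.
have in_le : insum oN lamN v <= \sum_(y | D y v && (y != x)) low_label (y, v).
  rewrite /insum (eq_bigr (fun y => low_label (y, v))); last first.
    by move=> y /inner_arc[_ xy _]; rewrite /low_label /= xy.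
  apply: leq_sum_pred => y oN_yv; have /inner_arc[_ xy _] := oN_yv.
  by rewrite D_from_inner // oN_yv nbr_neq_x.
by move: (oN_excess v); rewrite /partial_sum out_eq /excess /a; lia.
Qed.

Lemma x_sum_ge : #|nbhd e x| * (a + b + 1) <= x_sum.
Proof.
rewrite /nbhd cardsE; apply: sum_ge_const => v /rank_inner_gt0; lia.
Qed.

Lemma outer_sum_le r : outer_sum r <= deg e r * (a + b).
Proof.
rewrite /deg /nbhd cardsE; apply: sum_le_const => v _.
have rank_le : rank_outer (r, v) <= b := rank_le_card outer_arcs arc_key (r, v).
lia.
Qed.

Lemma outer_sum_ge r : outer r -> a + 1 <= outer_sum r.
Proof.
move=> out_r; have [v rv] := outer_adj out_r.
have rvR : (r, v) \in outer_arcs by rewrite inE /= out_r rv.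
have rank_pos : 0 < rank_outer (r, v) := rank_gt0 arc_key rvR.
by rewrite /outer_sum (bigD1 v) //=; lia.
Qed.

Lemma outer_deg_gt0 r : outer r -> 0 < deg e r.
Proof. by move=> out_r; have [v rv] := outer_adj out_r; apply/card_gt0P; exists v; rewrite inE. Qed.

Lemma outer_key_inj : injective outer_key.
Proof.
move=> r r'; rewrite /outer_key => eq_key.
have lt_r : (enum_rank r : nat) < #|T| by exact: ltn_ord.
have lt_r' : (enum_rank r' : nat) < #|T| by exact: ltn_ord.
have eq_deg : deg e r = deg e r' by nia.
have : (enum_rank r : nat) = enum_rank r' by rewrite eq_deg in eq_key; lia.
by move/val_inj/enum_rank_inj.
Qed.

Lemma outer_key_deg r r' : outer_key r < outer_key r' -> deg e r <= deg e r'.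
Proof.
have lt_r : (enum_rank r : nat) < #|T| by exact: ltn_ord.
have lt_r' : (enum_rank r' : nat) < #|T| by exact: ltn_ord.
rewrite /outer_key; nia.
Qed.

(* Outer vertices with larger key get strictly larger out-sums: every arc at r has
   rank at most c, every arc at r' has rank above c, and deg r <= deg r'. *)
Lemma outer_sum_lt r r' : outer r -> outer r' -> outer_key r < outer_key r' ->
  outer_sum r < outer_sum r'.
Proof.
move=> out_r out_r' lt_key.
pose c := #|[set p in outer_arcs | (arc_key p < (outer_key r')%:Z)%R]|.
have sum_r : outer_sum r <= deg e r * (a + c).
  rewrite /deg /nbhd cardsE; apply: sum_le_const => v _; rewrite leq_add2l.
  by apply: rank_le_below; rewrite /arc_key /= ltz_nat.
have sum_r' : deg e r' * (a + c + 1) <= outer_sum r'.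
  rewrite /deg /nbhd cardsE; apply: sum_ge_const => v r'v.
  rewrite -addnA leq_add2l addn1; apply: rank_gt_below => //.
  by rewrite inE /= out_r' r'v.
have := outer_key_deg lt_key; have := outer_deg_gt0 out_r; nia.
Qed.

Lemma nbhd_x_gt0 r : outer r -> 0 < #|nbhd e x|.
Proof. by move=> out_r; have := outer_deg_gt0 out_r; have := deg_le_x r; rewrite /deg; lia. Qed.

(* s(x) < s(r): deg r <= deg x = |N| and every x-label exceeds every R-label. *)
Lemma vsum_x_lt_outer r : outer r -> (vsum D label x < vsum D label r)%R.
Proof.
move=> out_r; rewrite vsum_x vsum_outer // ltrN2 ltz_nat.
have := outer_sum_le r; have := x_sum_ge; have := nbhd_x_gt0 out_r.
have : deg e r * (a + b) <= #|nbhd e x| * (a + b) by rewrite leq_mul2r deg_le_x orbT.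
nia.
Qed.

Lemma vsum_x_lt_inner v : e x v -> (vsum D label x < vsum D label v)%R.
Proof.
move=> xv; rewrite vsum_x vsum_inner //; have := partial_sum_lb xv; have := x_sum_ge.
have := rank_inner_gt0 xv.
have : 0 < #|nbhd e x| by apply/card_gt0P; exists v; rewrite inE.
nia.
Qed.

(* s(r) <= -(a+1) < s(v) for r in R and v in N. *)
Lemma vsum_outer_lt_inner r v : outer r -> e x v -> (vsum D label r < vsum D label v)%R.
Proof.
move=> out_r xv; rewrite vsum_outer // vsum_inner //.
have := partial_sum_lb xv; have := outer_sum_ge out_r; have := rank_inner_gt0 xv.
lia.
Qed.

(* Within N, s(v) = partial sum + a + b + rank, strictly increasing in the order. *)
Lemma vsum_inner_lt v w : e x v -> e x w -> lex_lt partial_sum v w ->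
  (vsum D label v < vsum D label w)%R.
Proof.
move=> xv xw lt_vw; rewrite !vsum_inner //.
have wN : w \in nbhd e x by rewrite inE.
have lt_rank : rank_inner v < rank_inner w := rank_lt wN lt_vw.
by have := lex_lt_key lt_vw; lia.
Qed.

Lemma vsum_outer_lt r r' : outer r -> outer r' -> outer_key r < outer_key r' ->
  (vsum D label r' < vsum D label r)%R.
Proof.
move=> out_r out_r' lt_key; rewrite !vsum_outer // ltrN2 ltz_nat.
exact: outer_sum_lt.
Qed.

Lemma vertex_cases u : [\/ u = x, e x u | outer u].
Proof.
case: (eqVneq u x) => [|neq_ux]; first by constructor 1.
by case xu: (e x u); [constructor 2 | constructor 3; rewrite /outer neq_ux xu].
Qed.

Lemma vsum_inj : injective (vsum D label).
Proof.
move=> u w; apply: contra_eq => neq_uw.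
case: (vertex_cases u) (vertex_cases w) => [eq_ux|xu|out_u] [eq_wx|xw|out_w].
- by move: neq_uw; rewrite eq_ux eq_wx eqxx.
- by rewrite eq_ux lt_eqF // vsum_x_lt_inner.
- by rewrite eq_ux lt_eqF // vsum_x_lt_outer.
- by rewrite eq_wx gt_eqF // vsum_x_lt_inner.
- by case/orP: (lex_lt_total partial_sum neq_uw) => /vsum_inner_lt lt_s;
    [rewrite lt_eqF // lt_s | rewrite gt_eqF // lt_s].
- by rewrite gt_eqF // vsum_outer_lt_inner.
- by rewrite eq_wx gt_eqF // vsum_x_lt_outer.
- by rewrite lt_eqF // vsum_outer_lt_inner.
- have : outer_key u != outer_key w by apply: contra neq_uw => /eqP/outer_key_inj ->.
  case: ltngtP => // lt_key _.
    by rewrite gt_eqF // vsum_outer_lt.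
  by rewrite lt_eqF // vsum_outer_lt.
Qed.

Lemma antimagic_D : has_antimagic_orientation e.
Proof.
exists D; split; first exact: D_orientation.
by exists label; split; [exact: label_labeling | exact: vsum_inj].
Qed.

End Construction.

Lemma inner_edge_sym (T : finType) (e : rel T) (x : T) :
  symmetric e -> symmetric (inner_edge e x).
Proof.
by move=> esym y z; rewrite /inner_edge esym; case: (e z y); case: (e x y); case: (e x z).
Qed.

Lemma inner_edge_irr (T : finType) (e : rel T) (x : T) :
  irreflexive e -> irreflexive (inner_edge e x).
Proof. by move=> eirr y; rewrite /inner_edge eirr. Qed.

Lemma antimagic_of_center (T : finType) (e : rel T) (x : T) :
  symmetric e -> irreflexive e ->
  (forall r, outer e x r -> exists v, e r v) ->
  (forall v, deg e v <= deg e x) ->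
  (forall u w, outer e x u -> outer e x w -> ~~ e u w) ->
  has_antimagic_orientation e.
Proof.
move=> esym eirr outer_adj deg_le_x outer_indep.
have [oN [lamN [oN_or lamN_inj lamN_range oN_exc]]] :=
  balanced_orientation x (inner_edge_sym x esym) (inner_edge_irr x eirr).
exact: (antimagic_D esym eirr outer_adj deg_le_x outer_indep oN_or lamN_inj lamN_range oN_exc).
Qed.

Lemma nbr_of_connected (T : finType) (e : rel T) (x r : T) :
  connected_graph e -> r != x -> exists v, e r v.
Proof.
move=> conn neq_rx; case/connectP: (conn r x) => -[|v p] /=.
  by move=> _ eq_xr; move: neq_rx; rewrite eq_xr eqxx.
by case/andP=> rv _ _; exists v.
Qed.

Unset Implicit Arguments.

Theorem lemma2p2 (T : finType) (e : rel T) (x : T) :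
  simple_graph e ->
  connected_graph e ->
  deg e x = maxdeg e ->
  (maxdeg e + 2 <= #|T|)%N ->
  independent e (~: cnbhd e x) ->
  has_antimagic_orientation e.
Proof.
move=> [esym eirr] conn deg_x _ indep.
apply: (antimagic_of_center (x := x)) => //.
- by move=> r /andP[neq_rx _]; apply: nbr_of_connected conn neq_rx.
- by move=> v; rewrite deg_x /maxdeg; apply: (leq_bigmax_cond (P := xpredT)).
- by move=> u w out_u out_w; apply: indep; rewrite !inE negb_or.
Qed.
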